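(* Let $g\geq 2$, $h$ and $t\ge 1$ be integers with $h>g^t(g-1)$. Then there exists a partition $\mathbb{N}=W_0\cup\cdots\cup W_{h-1}$ (into pairwise disjoint sets) such that each set $W_r$ ($0\le r\le h-1$) contains infinitely many intervals of at least $t$ consecutive integers, and every integer $n\geq h$ belongs to $hA_g(W_0)$, i.e. every integer $n\ge h$ can be written as $n=a_1+\cdots+a_h$ with $a_1,\dots,a_h\in A_g(W_0)$.
   Context: $\mathbb{N}$ denotes the set of all nonnegative integers. For a nonempty $W\subseteq\mathbb{N}$ and an integer $g\ge 2$, $A_g(W)$ is the set of all numbers of the form $\sum_{f\in F}a_f g^f$, where $F$ is a finite nonempty subset of $W$ and $1\le a_f\le g-1$ for each $f\in F$. For a set $B\subseteq \mathbb{N}$, $hB$ denotes the set of all sums $b_1+\cdots+b_h$ with $b_1,\dots,b_h\in B$ (repetitions allowed). *)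

From mathcomp Require Import all_boot.
Set Implicit Arguments. Unset Strict Implicit. Unset Printing Implicit Defensive.

Definition A_g (g : nat) (W : nat -> Prop) (n : nat) : Prop :=
  exists (F : seq nat) (a : nat -> nat),
    [/\ F != [::], uniq F, (forall f, f \in F -> W f),
        (forall f, f \in F -> 0 < a f <= g - 1)
      & n = \sum_(f <- F) a f * g ^ f].

Definition hfold_sum (h : nat) (B : nat -> Prop) (n : nat) : Prop :=
  exists s : seq nat, [/\ size s = h, (forall b, b \in s -> B b) & n = sumn s].

Definition inf_many_blocks (t : nat) (S : nat -> Prop) : Prop :=
  forall N, exists m, N <= m /\ forall i, i < t -> S (m + i).

From mathcomp Require Import all_boot zify.
Set Implicit Arguments. Unset Strict Implicit. Unset Printing Implicit Defensive.

(* Colour 0 the exponent 0 and the first half of every period of length 2t of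
   the exponents, and cycle the second halves through the h colours.  Write
   n = c0 + g q with h - 1 <= c0 <= h (g - 1) and expand q in base g^(2t),
   spreading each digit v = a + b g^t (a, b < g^t) over the first t positions
   as a + b + b (g^t - 1) = \sum_j (a_j + b_j + b (g - 1)) g^j.  This writes n
   as \sum_f c_f g^f with c_f supported on colour 0, c_f <= h (g - 1) and
   \sum_f c_f >= h, and such an expansion splits into h summands in A_g(W_0). *)

Section Expansion.

Variable g : nat.

Definition expansion (B : nat) (c : nat -> nat) : nat :=
  \sum_(0 <= f < B) c f * g ^ f.

Definition digits_cat (k : nat) (d c : nat -> nat) (f : nat) : nat :=
  if f < k then d f else c (f - k).

Lemma expansionD B d1 d2 :
  expansion B (fun f => d1 f + d2 f) = expansion B d1 + expansion B d2.
Proof. by rewrite /expansion -big_split; apply: eq_bigr => f _; rewrite mulnDl. Qed.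

Lemma expansion_cat k B d c :
  expansion (k + B) (digits_cat k d c) = expansion k d + g ^ k * expansion B c.
Proof.
rewrite /expansion (big_cat_nat _ (n := k)) ?leq_addr //=; congr (_ + _).
  by apply: eq_big_nat => f /andP[_ f_lt]; rewrite /digits_cat f_lt.
rewrite -{1}(add0n k) big_addn addKn big_distrr /=.
apply: eq_big_nat => f _.
by rewrite /digits_cat ltnNge leq_addl addnK expnD /= mulnA mulnC.
Qed.

Lemma expansion_digits t a : 0 < g -> a < g ^ t ->
  a = expansion t (fun j => a %/ g ^ j %% g).
Proof.
move=> g_gt0; rewrite /expansion.
elim: t a => [|t IH] a a_lt; first by rewrite big_geq //; lia.
rewrite big_nat_recl // expn0 divn1 muln1.
have a_div_lt : a %/ g < g ^ t by rewrite ltn_divLR // -expnSr.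
rewrite (eq_big_nat _ _ (F2 := fun j => g * (a %/ g %/ g ^ j %% g * g ^ j)));
  last first.
  by move=> j _; rewrite expnS divnMA mulnCA.
by rewrite -big_distrr /= -IH // {1}(divn_eq a g); lia.
Qed.

Lemma digit_sum_gt0 B c : 0 < expansion B c -> 0 < \sum_(0 <= f < B) c f.
Proof.
rewrite !lt0n; apply: contra; rewrite sum_nat_seq_eq0 => /allP c_eq0.
by rewrite /expansion big1_seq // => f /andP[_ /c_eq0 /eqP->].
Qed.

Lemma expansion_two_blocks t v : 0 < g -> v < g ^ t * g ^ t ->
  exists2 d, v = expansion t d & forall j, d j <= (g ^ t + 1) * (g - 1).
Proof.
move=> g_gt0 v_lt; have gt_gt0 : 0 < g ^ t by rewrite expn_gt0 g_gt0.
set a := v %% g ^ t; set b := v %/ g ^ t.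
have a_lt : a < g ^ t by rewrite ltn_pmod.
have b_lt : b < g ^ t by rewrite ltn_divLR.
exists (fun j => a %/ g ^ j %% g + b %/ g ^ j %% g + b * (g - 1)).
  have geom : expansion t (fun=> b * (g - 1)) = b * (g ^ t).-1.
    by rewrite predn_exp /expansion -big_distrr big_mkord /= subn1 mulnA.
  rewrite !expansionD -!expansion_digits // geom {1}(divn_eq v (g ^ t)) -/a -/b.
  by rewrite -{1}(prednK gt_gt0) mulnS; lia.
move=> j; have := ltn_pmod (a %/ g ^ j) g_gt0; have := ltn_pmod (b %/ g ^ j) g_gt0.
nia.
Qed.

Lemma periodic_expansion t m : 1 < g -> 0 < t ->
  exists B c, [/\ m = expansion B c, forall f, 0 < c f -> f %% t.*2 < t
                & forall f, c f <= (g ^ t + 1) * (g - 1)].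
Proof.
move=> g_gt1 t_gt0; set G := g ^ t * g ^ t.
have G_gt1 : 1 < G by rewrite /G -expnD -(expn0 g) ltn_exp2l //; lia.
elim/ltn_ind: m => m IH.
have [->|m_gt0] := posnP m.
  by exists 0, (fun=> 0); split => //; rewrite /expansion big_geq.
have [d m_mod d_le] :=
  @expansion_two_blocks t (m %% G) (ltnW g_gt1) (ltn_pmod _ (ltnW G_gt1)).
have [B [c [m_div c_supp c_le]]] := IH _ (ltn_Pdiv G_gt1 m_gt0).
exists (t.*2 + B), (digits_cat t.*2 (digits_cat t d (fun=> 0)) c); split.
- rewrite expansion_cat -addnn expansion_cat expnD -/G -m_div.
  rewrite [expansion t (fun=> 0)]/expansion big1 // muln0 addn0 -m_mod addnC mulnC.
  exact: divn_eq.
- move=> f; rewrite /digits_cat; case: ifP => [f_lt|/negbT].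
    by case: ifP => //; rewrite modn_small.
  by rewrite -leqNgt => /subnK f_eq /c_supp; rewrite -{2}f_eq modnDr.
- by move=> f; rewrite /digits_cat; case: ifP => _; [case: ifP|].
Qed.

End Expansion.

Lemma sum_shift_divn h x : 0 < h -> \sum_(0 <= i < h) (x + i) %/ h = x.
Proof.
move=> h_gt0; elim: x => [|x IH].
  rewrite big1_seq // => i /andP[_].
  by rewrite mem_index_iota => /andP[_ /divn_small].
have recl : \sum_(0 <= i < h.+1) (x + i) %/ h
    = x %/ h + \sum_(0 <= i < h) (x + i.+1) %/ h by rewrite big_nat_recl // addn0.
have recr : \sum_(0 <= i < h.+1) (x + i) %/ h
    = \sum_(0 <= i < h) (x + i) %/ h + (x + h) %/ h by rewrite big_nat_recr.
have last : (x + h) %/ h = x %/ h + 1 by rewrite -{1}(mul1n h) divnDMl.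
under eq_bigr do rewrite addSnnS.
lia.
Qed.

Lemma A_g_expansion g (W : nat -> Prop) B e :
  (forall f, e f <= g - 1) -> (forall f, 0 < e f -> W f) ->
  0 < \sum_(0 <= f < B) e f -> A_g g W (expansion g B e).
Proof.
move=> e_le e_supp sum_gt0.
exists [seq f <- index_iota 0 B | 0 < e f], e; split.
- rewrite -has_filter; move: sum_gt0; rewrite lt0n sum_nat_seq_neq0.
  by apply: sub_has => f /=; rewrite lt0n.
- exact/filter_uniq/iota_uniq.
- by move=> f; rewrite mem_filter => /andP[/e_supp].
- by move=> f; rewrite mem_filter => /andP[-> _]; rewrite e_le.
- rewrite big_filter big_mkcond; apply: eq_bigr => f _.
  by case: ifP => // /negbT; rewrite -eqn0Ngt => /eqP->.
Qed.

Lemma hfold_sum_expansion g h (W : nat -> Prop) B c : 0 < h ->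
  (forall f, c f <= h * (g - 1)) -> (forall f, 0 < c f -> W f) ->
  h <= \sum_(0 <= f < B) c f -> hfold_sum h (A_g g W) (expansion g B c).
Proof.
move=> h_gt0 c_le c_supp sum_ge.
(* Deal the sum_f c_f units out cyclically to the h summands: summand i gets
   the units of digit f counted by e i f, hence at most ceil (c_f / h) of them,
   and at least one unit in total. *)
pose S f := \sum_(0 <= k < f) c k.
pose e i f := (S f.+1 + i) %/ h - (S f + i) %/ h.
have S_rec f : S f.+1 = S f + c f by rewrite /S big_nat_recr.
have S_mono : {homo S : x y / x <= y}.
  by move=> x y xy; rewrite /S [X in _ <= X](big_cat_nat _ (n := x)) //= leq_addr.
have e_sum_i f : \sum_(0 <= i < h) e i f = c f.
  rewrite /e sumnB => [|i _]; last by rewrite leq_div2r // S_rec leq_add2r leq_addr.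
  by rewrite !sum_shift_divn // S_rec addKn.
have e_le i f : e i f <= g - 1.
  rewrite /e S_rec leq_subLR [_ + (g - 1)]addnC -divnMDl //; apply: leq_div2r.
  by have := c_le f; rewrite mulnC; lia.
have e_supp i f : 0 < e i f -> W f.
  move=> e_gt0; apply: c_supp; rewrite lt0n; apply: contraTneq e_gt0 => c_eq0.
  by rewrite /e S_rec c_eq0 addn0 subnn.
have e_sum_f i : i < h -> 0 < \sum_(0 <= f < B) e i f.
  move=> i_lt; rewrite /e telescope_sumn => [|x y xy]; last first.
    by rewrite leq_div2r // leq_add2r S_mono.
  rewrite /S [\sum_(0 <= k < 0) c k]big_geq // add0n (divn_small i_lt) subn0.
  by rewrite divn_gt0 //; lia.
exists [seq expansion g B (e i) | i <- index_iota 0 h]; split.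
- by rewrite size_map size_iota subn0.
- move=> x /mapP[i]; rewrite mem_index_iota => /andP[_ i_lt] ->.
  exact: A_g_expansion (e_le i) (e_supp i) (e_sum_f i i_lt).
- rewrite sumnE big_map /expansion exchange_big_nat /=.
  by apply: eq_bigr => f _; rewrite -big_distrl /= e_sum_i.
Qed.

Definition colour (h t x : nat) : nat :=
  if x is y.+1 then (if y %% t.*2 < t then 0 else y %/ t.*2 %% h) else 0.

Lemma colour_lt h t x : 0 < h -> colour h t x < h.
Proof. by move=> h_gt0; case: x => [|y] //=; case: ifP => // _; rewrite ltn_pmod. Qed.

Lemma colour_blocks h t r : 0 < t -> r < h ->
  inf_many_blocks t (fun x => colour h t x = r).
Proof.
move=> t_gt0 r_lt N; set k := N * h + r.
exists (k * t.*2 + t).+1; split; first by rewrite /k; nia.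
move=> i i_lt; rewrite addSn /colour -addnA modnMDl modn_small; last by lia.
rewrite ltnNge leq_addr /= divnMDl; last by lia.
by rewrite divn_small ?addn0 /k ?modnMDl ?modn_small //; lia.
Qed.

Lemma colour0_expansion g h t n :
  1 < g -> 0 < t -> g ^ t * (g - 1) < h -> h <= n ->
  exists B c, [/\ n = expansion g B c, forall f, c f <= h * (g - 1),
                  forall f, 0 < c f -> colour h t f = 0
                & h <= \sum_(0 <= f < B) c f].
Proof.
move=> g_gt1 t_gt0 h_gt n_ge.
have gt_lt_h : g ^ t < h by apply: leq_ltn_trans h_gt; rewrite leq_pmulr //; lia.
set c0 := h.-1 + (n - h.-1) %% g; set q := (n - h.-1) %/ g.
have c0_lt : (n - h.-1) %% g < g by rewrite ltn_pmod //; lia.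
have n_eq : n = c0 + g * q by have := divn_eq (n - h.-1) g; rewrite /c0 /q; lia.
have [B [c [q_eq c_supp c_le]]] := periodic_expansion q g_gt1 t_gt0.
have cat0 : digits_cat 1 (fun=> c0) c 0 = c0 by [].
have catS f : digits_cat 1 (fun=> c0) c f.+1 = c f by rewrite /digits_cat /= subn1.
exists (1 + B), (digits_cat 1 (fun=> c0) c); split.
- by rewrite expansion_cat -q_eq /expansion big_nat1 expn0 expn1 muln1.
- case=> [|f]; first by rewrite cat0 /c0; nia.
  by rewrite catS; apply: leq_trans (c_le f) _; rewrite leq_mul2r addn1 gt_lt_h orbT.
- by case=> [|f] //; rewrite catS => /c_supp; rewrite /colour => ->.
- rewrite add1n big_nat_recl //= cat0; under eq_bigr do rewrite catS.
  have [q0|q_gt0] := posnP q; first by rewrite /c0; lia.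
  by have := @digit_sum_gt0 g B c; rewrite -q_eq => /(_ q_gt0); lia.
Qed.

Theorem theorem2 (g h t : nat) :
  2 <= g -> 1 <= t -> g ^ t * (g - 1) < h ->
  exists W : nat -> nat -> Prop,
    (forall n, exists r, r < h /\ W r n) /\
    (forall n r1 r2, r1 < h -> r2 < h -> W r1 n -> W r2 n -> r1 = r2) /\
    (forall r, r < h -> inf_many_blocks t (W r)) /\
    (forall n, h <= n -> hfold_sum h (A_g g (W 0)) n).
Proof.
move=> g_gt1 t_gt0 h_gt; have h_gt0 : 0 < h := leq_trans (ltn0Sn _) h_gt.
exists (fun r x => colour h t x = r); split; last split; last split.
- by move=> n; exists (colour h t n); rewrite colour_lt.
- by move=> n r1 r2 _ _ <- <-.
- by move=> r; apply: colour_blocks.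
- move=> n n_ge.
  have [B [c [-> c_le c_supp sum_ge]]] := colour0_expansion g_gt1 t_gt0 h_gt n_ge.
  exact: hfold_sum_expansion.
Qed.
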